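(* Let $(\mu,u)$ be a classical structure on $A$ with spiders $\Xi_n^m$, classical channel $C_\Xi$, complementary endomorphism $H$, and let $\mathrm{CNOT}:=(\Xi_2^1\otimes H)\circ(1_A\otimes H\otimes 1_A)\circ(1_A\otimes\Xi_1^2)\circ(1_A\otimes H)$. Then the morphism $$\mathrm{Bell\text{-}Meas}:=\big((C_\Xi\circ H)\otimes C_\Xi\big)\circ\mathrm{CNOT}:A\otimes A\to A\otimes A$$ is a non-degenerate destructive measurement on two systems of type $A$, i.e. it equals $(C_\Xi\otimes C_\Xi)\circ U$ for some unitary $U:A\otimes A\to A\otimes A$ in $\mathbf C^{pure}$.
   Context: Setting. $\mathbf C$ is a strict symmetric monoidal category with monoidal unit $\mathrm I$, symmetry $\sigma$, and a dagger functor $(-)^\dagger$ (identity on objects, contravariant, involutive, strict monoidal). $\mathbf C^{pure}$ is a subcategory of $\mathbf C$ with the same objects, closed under $\otimes$ and $\dagger$, containing identities, symmetries and the maps $\eta_A$ below. Every object $A$ is self-dual: there is $\eta_A:\mathrm I\to A\otimes A$ in $\mathbf C^{pure}$ with $\epsilon_A:=\eta_A^\dagger$, $(\epsilon_A\otimes 1_A)\circ(1_A\otimes\eta_A)=1_A$ and $\sigma_{A,A}\circ\eta_A=\eta_A$. A morphism $U$ is unitary if $U^\dagger\circ U=1$ and $U\circ U^\dagger=1$. Environment structure: a family of morphisms $\top_A:A\to\mathrm I$ in $\mathbf C$ such that (E1) for all objects $A,B$ and all $f,g\in\mathbf C^{pure}(A,B)$: $f^\dagger\circ f=g^\dagger\circ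 g$ if and only if $\top_B\circ f=\top_B\circ g$; (E2) $\top_{A\otimes B}=\top_A\otimes\top_B$; (E3) $(1_A\otimes\top_A)\circ\eta_A=\bot_A$, where $\bot_A:=\top_A^\dagger$. Classical structure on $A$: morphisms $\mu:A\otimes A\to A$ and $u:\mathrm I\to A$ in $\mathbf C^{pure}$, with $\delta:=\mu^\dagger$, such that $\mu$ is associative with unit $u$, $\mu\circ\sigma_{A,A}=\mu$, $(1_A\otimes\mu)\circ(\delta\otimes 1_A)=\delta\circ\mu$, $\mu\circ\delta=1_A$, and $\eta_A=\delta\circ u$. Spiders: $\mu_0:=u$, $\mu_1:=1_A$, $\mu_{k+1}:=\mu\circ(\mu_k\otimes 1_A)$, and $\Xi_n^m:=\mu_m^\dagger\circ\mu_n:A^{\otimes n}\to A^{\otimes m}$. The classical channel is $C_\Xi:=(1_A\otimes\top_A)\circ\Xi_1^2$. Complementary endomorphism: $H:A\to A$ in $\mathbf C^{pure}$ with $(H\otimes 1_A)\circ\eta_A=(1_A\otimes H)\circ\eta_A$, $H^\dagger=H$, $H$ unitary, and $\Xi_2^1\circ(H\otimes H)\circ\Xi_1^2=\Xi_0^1\circ\Xi_1^0$. A non-degenerate destructive measurement on $n$ systems of type $A$ is a morphism $(C_\Xi\otimes\cdots\otimes C_\Xi)\circ U$ with $U:A^{\otimes n}\to A^{\otimes n}$ unitary. *)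

Set Implicit Arguments.
Unset Strict Implicit.

(* transport of a morphism along equalities of objects (needed because
   strictness of the monoidal structure is an equality of objects) *)
Definition castH {Ob : Type} {Hom : Ob -> Ob -> Type} {A B A' B' : Ob}
  (e1 : A = A') (e2 : B = B') (f : Hom A B) : Hom A' B' :=
  match e1 in _ = X, e2 in _ = Y return Hom X Y with
  | eq_refl, eq_refl => f end.

Record SMDC := {
  Ob : Type;
  Hom : Ob -> Ob -> Type;
  idm : forall A, Hom A A;
  comp : forall A B C, Hom B C -> Hom A B -> Hom A C;
  comp_idl : forall A B (f : Hom A B), comp (idm B) f = f;
  comp_idr : forall A B (f : Hom A B), comp f (idm A) = f;
  comp_assoc : forall A B C D (f : Hom A B) (g : Hom B C) (h : Hom C D),
      comp h (comp g f) = comp (comp h g) f;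
  unitO : Ob;
  tens : Ob -> Ob -> Ob;
  tensH : forall A B C D, Hom A B -> Hom C D -> Hom (tens A C) (tens B D);
  tens_assoc : forall A B C, tens (tens A B) C = tens A (tens B C);
  tens_unitl : forall A, tens unitO A = A;
  tens_unitr : forall A, tens A unitO = A;
  tensH_id : forall A B, tensH (idm A) (idm B) = idm (tens A B);
  tensH_comp : forall A B C A' B' C' (f : Hom A B) (g : Hom B C)
      (f' : Hom A' B') (g' : Hom B' C'),
      tensH (comp g f) (comp g' f') = comp (tensH g g') (tensH f f');
  tensH_assoc : forall A B C D E F (f : Hom A B) (g : Hom C D) (h : Hom E F),
      castH (Hom := Hom) (tens_assoc A C E) (tens_assoc B D F)
        (tensH (tensH f g) h) = tensH f (tensH g h);
  tensH_unitl : forall A B (f : Hom A B),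
      castH (Hom := Hom) (tens_unitl A) (tens_unitl B) (tensH (idm unitO) f) = f;
  tensH_unitr : forall A B (f : Hom A B),
      castH (Hom := Hom) (tens_unitr A) (tens_unitr B) (tensH f (idm unitO)) = f;
  sym : forall A B, Hom (tens A B) (tens B A);
  sym_nat : forall A B C D (f : Hom A B) (g : Hom C D),
      comp (sym B D) (tensH f g) = comp (tensH g f) (sym A C);
  sym_inv : forall A B, comp (sym B A) (sym A B) = idm (tens A B);
  sym_hex : forall A B C,
      sym A (tens B C) =
      castH (Hom := Hom) (tens_assoc A B C) (eq_sym (tens_assoc B C A))
        (comp (tensH (idm B) (sym A C))
              (castH (Hom := Hom) eq_refl (tens_assoc B A C)
                 (tensH (sym A B) (idm C))));
  dag : forall A B, Hom A B -> Hom B A;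
  dag_id : forall A, dag (idm A) = idm A;
  dag_comp : forall A B C (f : Hom A B) (g : Hom B C),
      dag (comp g f) = comp (dag f) (dag g);
  dag_invol : forall A B (f : Hom A B), dag (dag f) = f;
  dag_tens : forall A B C D (f : Hom A B) (g : Hom C D),
      dag (tensH f g) = tensH (dag f) (dag g);
  dag_sym : forall A B, dag (sym A B) = sym B A
}.

Arguments Hom : clear implicits.
Arguments idm {s} A.
Arguments comp {s A B C} _ _.
Arguments tensH {s A B C D} _ _.
Arguments sym {s} A B.
Arguments dag {s A B} _.
Arguments unitO {s}.
Arguments tens {s} _ _.
Arguments tens_assoc {s} A B C.
Arguments tens_unitl {s} A.
Arguments tens_unitr {s} A.

Section Defs.
Variable C : SMDC.
Local Notation Hom := (Hom C).
Local Notation I := (@unitO C).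
Local Notation "f \o g" := (comp f g) (at level 40, left associativity).
Local Notation "f (x) g" := (tensH f g) (at level 35).


Definition unitary {A B : Ob C} (U : Hom A B) : Prop :=
  dag U \o U = idm A /\ U \o dag U = idm B.

Definition pure_subcategory (pure : forall A B : Ob C, Hom A B -> Prop)
    (eta : forall A, Hom I (tens A A)) : Prop :=
  (forall A, pure A A (idm A)) /\
  (forall A B D (f : Hom A B) (g : Hom B D),
      pure _ _ f -> pure _ _ g -> pure _ _ (g \o f)) /\
  (forall A B A' B' (f : Hom A B) (g : Hom A' B'),
      pure _ _ f -> pure _ _ g -> pure _ _ (f (x) g)) /\
  (forall A B (f : Hom A B), pure _ _ f -> pure _ _ (dag f)) /\
  (forall A B, pure _ _ (sym A B)) /\
  (forall A, pure _ _ (eta A)).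

Definition self_dual (eta : forall A, Hom I (tens A A)) : Prop :=
  forall A,
    castH (Hom := Hom) (tens_unitr A) (tens_unitl A)
      ((dag (eta A) (x) idm A) \o
       castH (Hom := Hom) eq_refl (eq_sym (tens_assoc A A A)) (idm A (x) eta A))
      = idm A /\
    sym A A \o eta A = eta A.

Definition environment (pure : forall A B : Ob C, Hom A B -> Prop)
    (eta : forall A, Hom I (tens A A)) (top : forall A, Hom A I) : Prop :=
  (forall A B (f g : Hom A B), pure _ _ f -> pure _ _ g ->
      (dag f \o f = dag g \o g <-> top B \o f = top B \o g)) /\
  (forall A B, top (tens A B) =
      castH (Hom := Hom) eq_refl (tens_unitl I) (top A (x) top B)) /\
  (forall A, castH (Hom := Hom) eq_refl (tens_unitr A)
      ((idm A (x) top A) \o eta A) = dag (top A)).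

(* A^{(x) n}, with A^{(x)0} = I, A^{(x)1} = A, A^{(x)(n+1)} = A^{(x)n} (x) A *)
Fixpoint tpowS (A : Ob C) (n : nat) : Ob C :=
  match n with O => A | S k => tens (tpowS A k) A end.
Definition tpow (A : Ob C) (n : nat) : Ob C :=
  match n with O => I | S k => tpowS A k end.

Fixpoint mu_S (A : Ob C) (mu : Hom (tens A A) A) (n : nat) : Hom (tpowS A n) A :=
  match n return Hom (tpowS A n) A with
  | O => idm A
  | S k => mu \o (mu_S mu k (x) idm A)
  end.
Definition mu_n (A : Ob C) (mu : Hom (tens A A) A) (u : Hom I A) (n : nat)
  : Hom (tpow A n) A :=
  match n return Hom (tpow A n) A with O => u | S k => mu_S mu k end.

Definition Xi (A : Ob C) (mu : Hom (tens A A) A) (u : Hom I A) (n m : nat)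
  : Hom (tpow A n) (tpow A m) := dag (mu_n mu u m) \o mu_n mu u n.

Definition classical_structure (pure : forall A B : Ob C, Hom A B -> Prop)
    (eta : forall A, Hom I (tens A A))
    (A : Ob C) (mu : Hom (tens A A) A) (u : Hom I A) : Prop :=
  pure _ _ mu /\ pure _ _ u /\
  mu \o (mu (x) idm A) =
    castH (Hom := Hom) (eq_sym (tens_assoc A A A)) eq_refl (mu \o (idm A (x) mu)) /\
  castH (Hom := Hom) (tens_unitl A) eq_refl (mu \o (u (x) idm A)) = idm A /\
  castH (Hom := Hom) (tens_unitr A) eq_refl (mu \o (idm A (x) u)) = idm A /\
  mu \o sym A A = mu /\
  (idm A (x) mu) \o castH (Hom := Hom) eq_refl (tens_assoc A A A) (dag mu (x) idm A)
    = dag mu \o mu /\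
  mu \o dag mu = idm A /\
  eta A = dag mu \o u.

Definition C_Xi (top : forall A, Hom A I)
    (A : Ob C) (mu : Hom (tens A A) A) (u : Hom I A) : Hom A A :=
  castH (Hom := Hom) eq_refl (tens_unitr A) ((idm A (x) top A) \o Xi mu u 1 2).

Definition complementary (pure : forall A B : Ob C, Hom A B -> Prop)
    (eta : forall A, Hom I (tens A A))
    (A : Ob C) (mu : Hom (tens A A) A) (u : Hom I A) (H : Hom A A) : Prop :=
  pure _ _ H /\
  (H (x) idm A) \o eta A = (idm A (x) H) \o eta A /\
  dag H = H /\
  unitary H /\
  Xi mu u 2 1 \o (H (x) H) \o Xi mu u 1 2 = Xi mu u 0 1 \o Xi mu u 1 0.

Definition CNOT (A : Ob C) (mu : Hom (tens A A) A) (u : Hom I A) (H : Hom A A)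
  : Hom (tens A A) (tens A A) :=
  (Xi mu u 2 1 (x) H) \o ((idm A (x) H) (x) idm A)
  \o castH (Hom := Hom) eq_refl (eq_sym (tens_assoc A A A)) (idm A (x) Xi mu u 1 2)
  \o (idm A (x) H).

Definition BellMeas (top : forall A, Hom A I)
    (A : Ob C) (mu : Hom (tens A A) A) (u : Hom I A) (H : Hom A A)
  : Hom (tens A A) (tens A A) :=
  ((C_Xi top mu u \o H) (x) C_Xi top mu u) \o CNOT mu u H.

Fixpoint CXi_S (top : forall A, Hom A I)
    (A : Ob C) (mu : Hom (tens A A) A) (u : Hom I A) (n : nat)
  : Hom (tpowS A n) (tpowS A n) :=
  match n return Hom (tpowS A n) (tpowS A n) with
  | O => C_Xi top mu u
  | S k => CXi_S top mu u k (x) C_Xi top mu u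
  end.
Definition CXi_n (top : forall A, Hom A I)
    (A : Ob C) (mu : Hom (tens A A) A) (u : Hom I A) (n : nat)
  : Hom (tpow A n) (tpow A n) :=
  match n return Hom (tpow A n) (tpow A n) with
  | O => idm I | S k => CXi_S top mu u k end.

Definition nondeg_destructive_measurement
    (pure : forall A B : Ob C, Hom A B -> Prop) (top : forall A, Hom A I)
    (A : Ob C) (mu : Hom (tens A A) A) (u : Hom I A) (n : nat)
    (M : Hom (tpow A n) (tpow A n)) : Prop :=
  exists U : Hom (tpow A n) (tpow A n),
    pure _ _ U /\ unitary U /\ M = CXi_n top mu u n \o U.

End Defs.

(* Bell-Meas factors as (C_Xi ⊗ C_Xi) ∘ U with U := (H ⊗ 1) ∘ CNOT, so the content is
   that CNOT is unitary.  Up to associators CNOT is (μ ⊗ H) ∘ (1 ⊗ (H ⊗ 1) ∘ μ† ∘ H).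
   Because H slides through the cup μ† ∘ u, the Frobenius law still holds with H
   inserted on one leg; with it, both CNOT† ∘ CNOT and CNOT ∘ CNOT† reduce to a
   loop μ ∘ (H ⊗ H) ∘ μ†, which complementarity turns into u ∘ u†, and the
   (co)unit laws finish. *)

From Stdlib Require Import Eqdep Setoid.

Notation "g ∘ f" := (comp g f) (at level 40, left associativity).
Notation "f ⊗ g" := (tensH f g) (at level 35).

(* Equality of morphisms up to transport along equalities of their (co)domains;
   the structural isomorphisms of the strict monoidal structure are casts of
   identities, so all of them are [≈] to an identity. *)
Definition heq {C : SMDC} {X Y X' Y' : Ob C} (f : Hom C X Y) (g : Hom C X' Y') : Prop :=
  exists (e1 : X = X') (e2 : Y = Y'), castH (Hom := Hom C) e1 e2 f = g.
Infix "≈" := heq (at level 70).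

Ltac destruct_ob_eqs := repeat match goal with
  | e : @eq (Ob _) ?a ?a |- _ => rewrite (UIP_refl _ _ e) in *; clear e
  | e : @eq (Ob _) _ _ |- _ => destruct e
  end; simpl in *; subst.

Section HeterogeneousEquality.
Context {C : SMDC}.

Lemma heq_refl {X Y : Ob C} (f : Hom C X Y) : f ≈ f.
Proof. now exists eq_refl, eq_refl. Qed.

Lemma heq_eq {X Y : Ob C} (f g : Hom C X Y) : f ≈ g -> f = g.
Proof. intros [e1 [e2 E]]. now destruct_ob_eqs. Qed.

Lemma heq_sym {X Y X' Y' : Ob C} (f : Hom C X Y) (g : Hom C X' Y') : f ≈ g -> g ≈ f.
Proof. intros [e1 [e2 E]]. destruct_ob_eqs. apply heq_refl. Qed.

Lemma heq_trans {X Y X' Y' X'' Y'' : Ob C} (f : Hom C X Y) (g : Hom C X' Y')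
  (h : Hom C X'' Y'') : f ≈ g -> g ≈ h -> f ≈ h.
Proof. intros [e1 [e2 E]] [e1' [e2' E']]. destruct_ob_eqs. apply heq_refl. Qed.

Lemma castH_heq {X Y X' Y' : Ob C} (e1 : X = X') (e2 : Y = Y') (f : Hom C X Y) :
  castH (Hom := Hom C) e1 e2 f ≈ f.
Proof. apply heq_sym. now exists e1, e2. Qed.

Lemma tensH_assoc_heq {X Y Z W U V : Ob C} (f : Hom C X Y) (g : Hom C Z W) (h : Hom C U V) :
  (f ⊗ g) ⊗ h ≈ f ⊗ (g ⊗ h).
Proof. eapply heq_trans; [apply heq_sym, castH_heq | rewrite tensH_assoc; apply heq_refl]. Qed.

Lemma tensH_unitl_heq {X Y : Ob C} (f : Hom C X Y) : idm unitO ⊗ f ≈ f.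
Proof. eapply heq_trans; [apply heq_sym, castH_heq | rewrite tensH_unitl; apply heq_refl]. Qed.

Lemma castH_heq_idm {X Y X' Y' Z : Ob C} (e1 : X = X') (e2 : Y = Y') (f : Hom C X Y) :
  f ≈ idm Z -> castH (Hom := Hom C) e1 e2 f ≈ idm Z.
Proof. apply heq_trans, castH_heq. Qed.

Lemma comp_heq_idm {X Y W Z Z' : Ob C} (f : Hom C X Y) (g : Hom C Y W) :
  f ≈ idm Z -> g ≈ idm Z' -> g ∘ f ≈ idm Z.
Proof. intros [e1 [e2 E]] [e1' [e2' E']]. destruct_ob_eqs. rewrite comp_idl. apply heq_refl. Qed.

Lemma tensH_heq_idm {X Y X' Y' Z Z' : Ob C} (f : Hom C X Y) (g : Hom C X' Y') :
  f ≈ idm Z -> g ≈ idm Z' -> f ⊗ g ≈ idm (tens Z Z').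
Proof. intros [e1 [e2 E]] [e1' [e2' E']]. destruct_ob_eqs. rewrite tensH_id. apply heq_refl. Qed.

Lemma dag_heq_idm {X Y Z : Ob C} (f : Hom C X Y) : f ≈ idm Z -> dag f ≈ idm Z.
Proof. intros [e1 [e2 E]]. destruct_ob_eqs. rewrite dag_id. apply heq_refl. Qed.

(* Coherence: parallel composites of structural isomorphisms are equal. *)
Lemma structural_coherence {X Y Z Z' : Ob C} (f g : Hom C X Y) :
  f ≈ idm Z -> g ≈ idm Z' -> f = g.
Proof.
  intros Hf Hg. apply heq_eq. eapply heq_trans; [exact Hf|].
  eapply heq_trans; [|apply heq_sym; exact Hg].
  destruct Hf as [e1 [e2 _]], Hg as [e1' [e2' _]].
  assert (e : Z = Z') by congruence. destruct e. apply heq_refl.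
Qed.

Lemma comp_heq_idml {X Y W Z X' Y' : Ob C} (f : Hom C X Y) (g : Hom C Y W) (k : Hom C X' Y') :
  g ≈ idm Z -> f ≈ k -> g ∘ f ≈ k.
Proof. intros [e1 [e2 E]] Hf. destruct_ob_eqs. now rewrite comp_idl. Qed.

Lemma comp_heq_idmr {X Y W Z X' Y' : Ob C} (f : Hom C X Y) (g : Hom C Y W) (k : Hom C X' Y') :
  f ≈ idm Z -> g ≈ k -> g ∘ f ≈ k.
Proof. intros [e1 [e2 E]] Hg. destruct_ob_eqs. now rewrite comp_idr. Qed.

End HeterogeneousEquality.

Definition alpha {C : SMDC} (X Y Z : Ob C) : Hom C (tens (tens X Y) Z) (tens X (tens Y Z)) :=
  castH (Hom := Hom C) eq_refl (tens_assoc X Y Z) (idm _).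
Definition alpha_inv {C : SMDC} (X Y Z : Ob C) : Hom C (tens X (tens Y Z)) (tens (tens X Y) Z) :=
  castH (Hom := Hom C) (tens_assoc X Y Z) eq_refl (idm _).
Definition lambda {C : SMDC} (X : Ob C) : Hom C (tens unitO X) X :=
  castH (Hom := Hom C) eq_refl (tens_unitl X) (idm _).
Definition lambda_inv {C : SMDC} (X : Ob C) : Hom C X (tens unitO X) :=
  castH (Hom := Hom C) (tens_unitl X) eq_refl (idm _).
Definition rho {C : SMDC} (X : Ob C) : Hom C (tens X unitO) X :=
  castH (Hom := Hom C) eq_refl (tens_unitr X) (idm _).
Definition rho_inv {C : SMDC} (X : Ob C) : Hom C X (tens X unitO) :=
  castH (Hom := Hom C) (tens_unitr X) eq_refl (idm _).

Ltac structural :=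
  unfold alpha, alpha_inv, lambda, lambda_inv, rho, rho_inv;
  repeat first [ eapply comp_heq_idm | eapply tensH_heq_idm | eapply dag_heq_idm
               | eapply castH_heq_idm | apply heq_refl ].

Ltac coherence := eapply structural_coherence; structural.

Section Structural.
Context {C : SMDC}.

Lemma alpha_nat {X Y Z W U V : Ob C} (f : Hom C X Y) (g : Hom C Z W) (h : Hom C U V) :
  alpha Y W V ∘ ((f ⊗ g) ⊗ h) = (f ⊗ (g ⊗ h)) ∘ alpha X Z U.
Proof.
  apply heq_eq. eapply heq_trans.
  - eapply comp_heq_idml; [structural | apply tensH_assoc_heq].
  - apply heq_sym. eapply comp_heq_idmr; [structural | apply heq_refl].
Qed.

Lemma alpha_inv_nat {X Y Z W U V : Ob C} (f : Hom C X Y) (g : Hom C Z W) (h : Hom C U V) :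
  alpha_inv Y W V ∘ (f ⊗ (g ⊗ h)) = ((f ⊗ g) ⊗ h) ∘ alpha_inv X Z U.
Proof.
  apply heq_eq. eapply heq_trans.
  - eapply comp_heq_idml; [structural | apply heq_sym, tensH_assoc_heq].
  - apply heq_sym. eapply comp_heq_idmr; [structural | apply heq_refl].
Qed.

Lemma lambda_inv_nat {X Y : Ob C} (f : Hom C X Y) :
  lambda_inv Y ∘ f = (idm unitO ⊗ f) ∘ lambda_inv X.
Proof.
  apply heq_eq. eapply heq_trans.
  - eapply comp_heq_idml; [structural | apply heq_refl].
  - apply heq_sym. eapply comp_heq_idmr; [structural | apply tensH_unitl_heq].
Qed.

Lemma alpha_alpha_inv (X Y Z : Ob C) : alpha X Y Z ∘ alpha_inv X Y Z = idm _.
Proof. coherence. Qed.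
Lemma dag_alpha (X Y Z : Ob C) : dag (alpha X Y Z) = alpha_inv X Y Z.
Proof. coherence. Qed.
Lemma dag_alpha_inv (X Y Z : Ob C) : dag (alpha_inv X Y Z) = alpha X Y Z.
Proof. coherence. Qed.
Lemma dag_lambda (X : Ob C) : dag (lambda X) = lambda_inv X.
Proof. coherence. Qed.
Lemma lambda_lambda_inv (X : Ob C) : lambda X ∘ lambda_inv X = idm X.
Proof. coherence. Qed.
Lemma rho_rho_inv (X : Ob C) : rho X ∘ rho_inv X = idm X.
Proof. coherence. Qed.

Lemma castH_cod_alpha {X Y Z W : Ob C} (f : Hom C W (tens (tens X Y) Z)) :
  castH (Hom := Hom C) eq_refl (tens_assoc X Y Z) f = alpha X Y Z ∘ f.
Proof.
  unfold alpha. destruct (tens_assoc X Y Z). simpl. now rewrite comp_idl.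
Qed.

Lemma castH_cod_alpha_inv {X Y Z W : Ob C} (f : Hom C W (tens X (tens Y Z))) :
  castH (Hom := Hom C) eq_refl (eq_sym (tens_assoc X Y Z)) f = alpha_inv X Y Z ∘ f.
Proof.
  unfold alpha_inv. destruct (tens_assoc X Y Z). simpl. now rewrite comp_idl.
Qed.

Lemma castH_dom_alpha {X Y Z W : Ob C} (f : Hom C (tens X (tens Y Z)) W) :
  castH (Hom := Hom C) (eq_sym (tens_assoc X Y Z)) eq_refl f = f ∘ alpha X Y Z.
Proof.
  unfold alpha. destruct (tens_assoc X Y Z). simpl. now rewrite comp_idr.
Qed.

Lemma castH_dom_lambda {X W : Ob C} (f : Hom C (tens unitO X) W) :
  castH (Hom := Hom C) (tens_unitl X) eq_refl f = f ∘ lambda_inv X.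
Proof.
  unfold lambda_inv. destruct (tens_unitl X). simpl. now rewrite comp_idr.
Qed.

Lemma castH_dom_rho {X W : Ob C} (f : Hom C (tens X unitO) W) :
  castH (Hom := Hom C) (tens_unitr X) eq_refl f = f ∘ rho_inv X.
Proof.
  unfold rho_inv. destruct (tens_unitr X). simpl. now rewrite comp_idr.
Qed.

Lemma idm_tensH_comp {X Y Z W : Ob C} (f : Hom C X Y) (g : Hom C Y Z) :
  idm W ⊗ (g ∘ f) = (idm W ⊗ g) ∘ (idm W ⊗ f).
Proof. now rewrite <- tensH_comp, comp_idl. Qed.

Lemma comp_tensH_idm {X Y Z W : Ob C} (f : Hom C X Y) (g : Hom C Y Z) :
  (g ∘ f) ⊗ idm W = (g ⊗ idm W) ∘ (f ⊗ idm W).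
Proof. now rewrite <- tensH_comp, comp_idl. Qed.

Lemma tensH_right_first {X Y Z W : Ob C} (f : Hom C X Y) (g : Hom C Z W) :
  f ⊗ g = (f ⊗ idm W) ∘ (idm X ⊗ g).
Proof. now rewrite <- tensH_comp, comp_idl, comp_idr. Qed.

Lemma tensH_left_first {X Y Z W : Ob C} (f : Hom C X Y) (g : Hom C Z W) :
  f ⊗ g = (idm Y ⊗ g) ∘ (f ⊗ idm Z).
Proof. now rewrite <- tensH_comp, comp_idl, comp_idr. Qed.

Lemma tensH_comp_idm {X Y Z W V : Ob C} (h : Hom C V X) (f : Hom C X Y) (g : Hom C Z W) :
  (f ⊗ g) ∘ (h ⊗ idm Z) = (f ∘ h) ⊗ g.
Proof. now rewrite <- tensH_comp, comp_idr. Qed.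

End Structural.

Section ChainRewriting.
Context {C : SMDC}.

Lemma chain_congr2 {X Y Z W : Ob C} (a : Hom C X Y) (b : Hom C Y Z) (c : Hom C X Z) :
  b ∘ a = c -> forall h : Hom C Z W, h ∘ b ∘ a = h ∘ c.
Proof. intros E h. now rewrite <- comp_assoc, E. Qed.

Lemma chain_congr3 {X Y Z V W : Ob C} (a : Hom C X Y) (b : Hom C Y Z) (b' : Hom C Z V)
  (c : Hom C X V) : b' ∘ b ∘ a = c -> forall h : Hom C V W, h ∘ b' ∘ b ∘ a = h ∘ c.
Proof. intros E h. now rewrite <- !comp_assoc, <- E, !comp_assoc. Qed.

Lemma chain_congr4 {X Y Z V U W : Ob C} (a : Hom C X Y) (b : Hom C Y Z) (b' : Hom C Z V)
  (b'' : Hom C V U) (c : Hom C X U) :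
  b'' ∘ b' ∘ b ∘ a = c -> forall h : Hom C U W, h ∘ b'' ∘ b' ∘ b ∘ a = h ∘ c.
Proof. intros E h. now rewrite <- !comp_assoc, <- E, !comp_assoc. Qed.

End ChainRewriting.

(* Composites are kept left-nested; [crewrite L] rewrites with an equation
   [L] whose left side is a composite of up to four factors occurring at the
   right end of such a chain. *)
Ltac lassoc := repeat rewrite comp_assoc.
Ltac crewrite L :=
  first [ rewrite (chain_congr4 _ _ _ _ _ L) | rewrite (chain_congr3 _ _ _ _ L)
        | rewrite (chain_congr2 _ _ _ L) | rewrite L ]; lassoc.

Section ClassicalStructure.
Context {C : SMDC} {pure : forall A B : Ob C, Hom C A B -> Prop}
  {eta : forall A : Ob C, Hom C unitO (tens A A)}
  {A : Ob C} {mu : Hom C (tens A A) A} {u : Hom C unitO A}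
  (Hcl : classical_structure pure eta mu u).

Lemma classical_mu_assoc : mu ∘ (mu ⊗ idm A) = mu ∘ (idm A ⊗ mu) ∘ alpha A A A.
Proof. destruct Hcl as (_ & _ & E & _). now rewrite E, castH_dom_alpha. Qed.

Lemma classical_mu_unitl : mu ∘ (u ⊗ idm A) = lambda A.
Proof.
  destruct Hcl as (_ & _ & _ & E & _). rewrite castH_dom_lambda in E.
  replace (lambda A) with (mu ∘ (u ⊗ idm A) ∘ lambda_inv A ∘ lambda A) by now rewrite E, comp_idl.
  rewrite <- comp_assoc. replace (lambda_inv A ∘ lambda A) with (idm (tens unitO A)) by coherence.
  now rewrite comp_idr.
Qed.

Lemma classical_mu_unitr : mu ∘ (idm A ⊗ u) = rho A.
Proof.
  destruct Hcl as (_ & _ & _ & _ & E & _). rewrite castH_dom_rho in E.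
  replace (rho A) with (mu ∘ (idm A ⊗ u) ∘ rho_inv A ∘ rho A) by now rewrite E, comp_idl.
  rewrite <- comp_assoc. replace (rho_inv A ∘ rho A) with (idm (tens A unitO)) by coherence.
  now rewrite comp_idr.
Qed.

Lemma classical_frobenius : (idm A ⊗ mu) ∘ alpha A A A ∘ (dag mu ⊗ idm A) = dag mu ∘ mu.
Proof.
  destruct Hcl as (_ & _ & _ & _ & _ & _ & E & _).
  now rewrite castH_cod_alpha, comp_assoc in E.
Qed.

Lemma classical_eta : eta A = dag mu ∘ u.
Proof. now destruct Hcl as (_ & _ & _ & _ & _ & _ & _ & _ & E). Qed.

End ClassicalStructure.

Section Spiders.
Context {C : SMDC} {A : Ob C} (mu : Hom C (tens A A) A) (u : Hom C unitO A).

Lemma Xi21 : Xi mu u 2 1 = mu.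
Proof. unfold Xi. simpl. now rewrite dag_id, tensH_id, comp_idl, comp_idr. Qed.
Lemma Xi12 : Xi mu u 1 2 = dag mu.
Proof. unfold Xi. simpl. now rewrite tensH_id, !comp_idr. Qed.
Lemma Xi01 : Xi mu u 0 1 = u.
Proof. unfold Xi. simpl. now rewrite dag_id, comp_idl. Qed.
Lemma Xi10 : Xi mu u 1 0 = dag u.
Proof. unfold Xi. simpl. now rewrite comp_idr. Qed.

End Spiders.

Section Complementary.
Context {C : SMDC} {pure : forall A B : Ob C, Hom C A B -> Prop}
  {eta : forall A : Ob C, Hom C unitO (tens A A)}
  {A : Ob C} {mu : Hom C (tens A A) A} {u : Hom C unitO A} {H : Hom C A A}
  (HH : complementary pure eta mu u H).

Lemma complementary_dag : dag H = H.
Proof. now destruct HH as (_ & _ & E & _). Qed.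

Lemma complementary_unitary : unitary H.
Proof. now destruct HH as (_ & _ & _ & E & _). Qed.

Lemma complementary_involutive : H ∘ H = idm A.
Proof.
  destruct complementary_unitary as [E _]. now rewrite complementary_dag in E.
Qed.

Lemma complementary_cup (Hcl : classical_structure pure eta mu u) :
  (H ⊗ idm A) ∘ (dag mu ∘ u) = (idm A ⊗ H) ∘ (dag mu ∘ u).
Proof.
  destruct HH as (_ & E & _). now rewrite (classical_eta Hcl) in E.
Qed.

Lemma complementary_hopf : mu ∘ (H ⊗ H) ∘ dag mu = u ∘ dag u.
Proof.
  destruct HH as (_ & _ & _ & _ & E). now rewrite Xi21, Xi12, Xi01, Xi10 in E.
Qed.

End Complementary.

Section Cnot.
Context {C : SMDC} {A : Ob C}.
Variables (mu : Hom C (tens A A) A) (u : Hom C unitO A) (H : Hom C A A).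
Hypothesis frobenius : (idm A ⊗ mu) ∘ alpha A A A ∘ (dag mu ⊗ idm A) = dag mu ∘ mu.
Hypothesis mu_assoc : mu ∘ (mu ⊗ idm A) = mu ∘ (idm A ⊗ mu) ∘ alpha A A A.
Hypothesis mu_unitl : mu ∘ (u ⊗ idm A) = lambda A.
Hypothesis mu_unitr : mu ∘ (idm A ⊗ u) = rho A.
Hypothesis H_involutive : H ∘ H = idm A.
Hypothesis dag_H : dag H = H.
Hypothesis H_cup : (H ⊗ idm A) ∘ (dag mu ∘ u) = (idm A ⊗ H) ∘ (dag mu ∘ u).
Hypothesis hopf : mu ∘ (H ⊗ H) ∘ dag mu = u ∘ dag u.

Lemma frobenius_mirror : (mu ⊗ idm A) ∘ alpha_inv A A A ∘ (idm A ⊗ dag mu) = dag mu ∘ mu.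
Proof.
  apply (f_equal dag) in frobenius.
  rewrite !dag_comp, !dag_tens, dag_alpha, !dag_id, dag_invol, comp_assoc in frobenius.
  exact frobenius.
Qed.

Lemma dag_mu_coassoc :
  alpha_inv A A A ∘ (idm A ⊗ dag mu) ∘ dag mu = (dag mu ⊗ idm A) ∘ dag mu.
Proof.
  apply (f_equal dag) in mu_assoc.
  rewrite !dag_comp, !dag_tens, dag_alpha, !dag_id, comp_assoc in mu_assoc.
  now symmetry.
Qed.

Lemma dag_mu_counitl : (dag u ⊗ idm A) ∘ dag mu = lambda_inv A.
Proof.
  apply (f_equal dag) in mu_unitl.
  now rewrite dag_comp, dag_tens, dag_id, dag_lambda in mu_unitl.
Qed.

Lemma dag_mu_cup_right :
  dag mu = (mu ⊗ idm A) ∘ alpha_inv A A A ∘ (idm A ⊗ (dag mu ∘ u)) ∘ rho_inv A.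
Proof.
  rewrite idm_tensH_comp. lassoc. crewrite frobenius_mirror.
  now rewrite <- (comp_assoc _ mu), mu_unitr, <- comp_assoc, rho_rho_inv, comp_idr.
Qed.

Lemma dag_mu_cup_left :
  dag mu = (idm A ⊗ mu) ∘ alpha A A A ∘ ((dag mu ∘ u) ⊗ idm A) ∘ lambda_inv A.
Proof.
  rewrite comp_tensH_idm. lassoc. crewrite frobenius.
  now rewrite <- (comp_assoc _ mu), mu_unitl, <- comp_assoc, lambda_lambda_inv, comp_idr.
Qed.

(* [H] moves from an output of [dag mu] to an input of [mu] through the cup. *)
Lemma H_dag_mu_cup_right : (idm A ⊗ H) ∘ dag mu =
  ((mu ∘ (idm A ⊗ H)) ⊗ idm A) ∘ alpha_inv A A A ∘ (idm A ⊗ (dag mu ∘ u)) ∘ rho_inv A.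
Proof.
  rewrite dag_mu_cup_right at 1. lassoc.
  assert (E : (idm A ⊗ H) ∘ (mu ⊗ idm A) = (mu ⊗ idm A) ∘ ((idm A ⊗ idm A) ⊗ H))
    by now rewrite <- !tensH_comp, !comp_idl, !comp_idr, tensH_id, comp_idr.
  crewrite E. rewrite <- (comp_assoc _ _ (mu ⊗ idm A)), <- alpha_inv_nat. lassoc.
  crewrite (eq_sym (idm_tensH_comp (W:=A) (dag mu ∘ u) (idm A ⊗ H))).
  rewrite <- (comp_assoc u (dag mu) (idm A ⊗ H)), <- H_cup, idm_tensH_comp. lassoc.
  rewrite <- (comp_assoc _ _ (mu ⊗ idm A)), alpha_inv_nat. lassoc.
  now crewrite (eq_sym (comp_tensH_idm (W:=A) (idm A ⊗ H) mu)).
Qed.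

Lemma twisted_frobenius : (idm A ⊗ mu) ∘ alpha A A A ∘ (((idm A ⊗ H) ∘ dag mu) ⊗ idm A)
  = ((mu ∘ (idm A ⊗ H)) ⊗ idm A) ∘ alpha_inv A A A ∘ (idm A ⊗ dag mu).
Proof.
  rewrite H_dag_mu_cup_right. rewrite dag_mu_cup_left at 2.
  set (P := mu ∘ (idm A ⊗ H)). set (cup := dag mu ∘ u).
  transitivity ((P ⊗ mu) ∘ alpha (tens A A) A A ∘ (alpha_inv A A A ⊗ idm A)
                ∘ ((idm A ⊗ cup) ⊗ idm A) ∘ (rho_inv A ⊗ idm A)).
  { rewrite !comp_tensH_idm. lassoc.
    rewrite <- (comp_assoc _ (alpha _ _ _)), alpha_nat, tensH_id. lassoc.
    now crewrite (eq_sym (tensH_left_first P mu)). }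
  rewrite !idm_tensH_comp. lassoc.
  rewrite <- (comp_assoc _ (alpha_inv _ _ _)), alpha_inv_nat, tensH_id. lassoc.
  crewrite (eq_sym (tensH_right_first P mu)).
  rewrite <- (comp_idr (idm A ⊗ (cup ⊗ idm A))), <- (alpha_alpha_inv A unitO A). lassoc.
  crewrite (eq_sym (alpha_nat (idm A) cup (idm A))).
  assert (E : alpha (tens A A) A A ∘ (alpha_inv A A A ⊗ idm A)
             = alpha_inv A A (tens A A) ∘ (idm A ⊗ alpha A A A) ∘ alpha A (tens A A) A)
    by coherence.
  crewrite E.
  replace (rho_inv A ⊗ idm A) with (alpha_inv A unitO A ∘ (idm A ⊗ lambda_inv A))
    by coherence.
  now lassoc.
Qed.

Local Notation twist := (H ∘ mu ∘ (H ⊗ idm A)).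
Local Notation cotwist := ((H ⊗ idm A) ∘ dag mu ∘ H).

(* The loop closed by [twist] and [cotwist] collapses to the unit: this is where
   complementarity enters. *)
Lemma twist_hopf_loop : (idm A ⊗ twist) ∘ alpha A A A ∘ (dag mu ⊗ idm A) ∘ cotwist
  = (u ⊗ idm A) ∘ lambda_inv A.
Proof.
  rewrite !idm_tensH_comp. lassoc.
  rewrite <- (comp_assoc (alpha _ _ _)), <- alpha_nat. lassoc.
  crewrite (eq_sym (comp_tensH_idm (W:=A) (dag mu) (idm A ⊗ H))).
  crewrite twisted_frobenius.
  crewrite (eq_sym (tensH_left_first H (dag mu))). rewrite (tensH_right_first H (dag mu)). lassoc.
  rewrite <- (tensH_id A A). crewrite (alpha_inv_nat H (idm A) (idm A)).
  crewrite (eq_sym (comp_tensH_idm (W:=A) (H ⊗ idm A) (mu ∘ (idm A ⊗ H)))).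
  rewrite <- (comp_assoc (H ⊗ idm A)), (eq_sym (tensH_left_first H H)).
  crewrite dag_mu_coassoc.
  crewrite (eq_sym (comp_tensH_idm (W:=A) (dag mu) (mu ∘ (H ⊗ H)))).
  rewrite hopf, comp_tensH_idm. lassoc. crewrite dag_mu_counitl.
  crewrite (eq_sym (tensH_left_first u H)). rewrite (tensH_right_first u H). lassoc.
  crewrite (eq_sym (lambda_inv_nat H)). crewrite H_involutive. now rewrite comp_idr.
Qed.

Lemma mu_twist_frobenius : mu ∘ (idm A ⊗ twist) ∘ alpha A A A ∘ (dag mu ⊗ idm A)
  = rho A ∘ (idm A ⊗ dag u).
Proof.
  rewrite !idm_tensH_comp. lassoc.
  rewrite <- (comp_assoc (alpha _ _ _)), <- alpha_nat. lassoc.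
  crewrite (eq_sym (comp_tensH_idm (W:=A) (dag mu) (idm A ⊗ H))).
  crewrite twisted_frobenius.
  crewrite (eq_sym (tensH_left_first (mu ∘ (idm A ⊗ H)) H)).
  rewrite <- (comp_idl H) at 2. rewrite tensH_comp. lassoc.
  crewrite mu_assoc. crewrite (alpha_nat (idm A) H H). crewrite (alpha_alpha_inv A A A).
  rewrite comp_idr.
  crewrite (eq_sym (idm_tensH_comp (W:=A) (H ⊗ H) mu)).
  crewrite (eq_sym (idm_tensH_comp (W:=A) (dag mu) (mu ∘ (H ⊗ H)))).
  rewrite hopf, idm_tensH_comp. lassoc. now crewrite mu_unitr.
Qed.

Lemma cotwist_twist :
  cotwist ∘ H ∘ mu ∘ (H ⊗ idm A) = (twist ⊗ idm A) ∘ alpha_inv A A A ∘ (idm A ⊗ dag mu).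
Proof.
  lassoc. crewrite H_involutive. rewrite comp_idr.
  rewrite <- (comp_assoc mu (dag mu) (H ⊗ idm A)), <- frobenius_mirror. lassoc.
  crewrite (eq_sym (tensH_left_first H (dag mu))). rewrite (tensH_right_first H (dag mu)).
  lassoc. rewrite <- (tensH_id A A). crewrite (alpha_inv_nat H (idm A) (idm A)).
  crewrite (eq_sym (comp_tensH_idm (W:=A) (H ⊗ idm A) mu)).
  now crewrite (eq_sym (comp_tensH_idm (W:=A) (mu ∘ (H ⊗ idm A)) H)).
Qed.

Definition cnot_normal : Hom C (tens A A) (tens A A) :=
  (mu ⊗ H) ∘ alpha_inv A A A ∘ (idm A ⊗ cotwist).

Lemma cnot_normal_isometry : dag cnot_normal ∘ cnot_normal = idm _.
Proof.
  unfold cnot_normal.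
  repeat rewrite ?dag_comp, ?dag_tens, ?dag_H, ?dag_alpha_inv, ?dag_id, ?dag_invol. lassoc.
  crewrite (eq_sym (tensH_comp mu (dag mu) H H)).
  rewrite H_involutive, <- frobenius_mirror, !comp_tensH_idm. lassoc.
  crewrite (alpha_nat mu (idm A) (idm A)). rewrite tensH_id.
  crewrite (eq_sym (tensH_left_first mu twist)). rewrite (tensH_right_first mu twist). lassoc.
  crewrite (eq_sym (alpha_inv_nat (idm A) (dag mu) (idm A))).
  assert (E : alpha (tens A A) A A ∘ (alpha_inv A A A ⊗ idm A) ∘ alpha_inv A (tens A A) A
              = alpha_inv A A (tens A A) ∘ (idm A ⊗ alpha A A A)) by coherence.
  crewrite E. rewrite <- (tensH_id A A).
  crewrite (eq_sym (alpha_inv_nat (idm A) (idm A) twist)).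
  assert (loop : (idm A ⊗ (idm A ⊗ twist)) ∘ (idm A ⊗ alpha A A A)
                 ∘ (idm A ⊗ (dag mu ⊗ idm A)) ∘ (idm A ⊗ cotwist)
                 = (idm A ⊗ (u ⊗ idm A)) ∘ (idm A ⊗ lambda_inv A)).
  { rewrite <- !idm_tensH_comp. f_equal. apply twist_hopf_loop. }
  crewrite loop. crewrite (alpha_inv_nat (idm A) u (idm A)).
  crewrite (eq_sym (comp_tensH_idm (W:=A) (idm A ⊗ u) mu)).
  rewrite mu_unitr, tensH_id. coherence.
Qed.

Lemma cnot_normal_coisometry : cnot_normal ∘ dag cnot_normal = idm _.
Proof.
  unfold cnot_normal.
  repeat rewrite ?dag_comp, ?dag_tens, ?dag_H, ?dag_alpha_inv, ?dag_id, ?dag_invol. lassoc.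
  crewrite (eq_sym (idm_tensH_comp (W:=A) twist cotwist)).
  rewrite cotwist_twist, !idm_tensH_comp. lassoc.
  crewrite (eq_sym (alpha_nat (idm A) (idm A) (dag mu))). rewrite tensH_id.
  crewrite (eq_sym (tensH_comp (dag mu) (idm (tens A A)) H (dag mu))). rewrite comp_idl.
  rewrite (tensH_right_first (dag mu) (dag mu ∘ H)), idm_tensH_comp. lassoc.
  crewrite (alpha_inv_nat (idm A) twist (idm A)).
  assert (E : alpha_inv A (tens A A) A ∘ (idm A ⊗ alpha_inv A A A) ∘ alpha A A (tens A A)
              = (alpha A A A ⊗ idm A) ∘ alpha_inv (tens A A) A A) by coherence.
  crewrite E. rewrite <- (tensH_id A A). crewrite (alpha_inv_nat (dag mu) (idm A) (idm A)).
  crewrite (tensH_comp_idm (idm A ⊗ twist) mu H).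
  crewrite (tensH_comp_idm (alpha A A A) (mu ∘ (idm A ⊗ twist)) H).
  crewrite (tensH_comp_idm (dag mu ⊗ idm A) (mu ∘ (idm A ⊗ twist) ∘ alpha A A A) H).
  rewrite mu_twist_frobenius.
  rewrite (tensH_left_first (rho A ∘ (idm A ⊗ dag u)) H), comp_tensH_idm. lassoc.
  crewrite (eq_sym (alpha_inv_nat (idm A) (dag u) (idm A))).
  crewrite (eq_sym (idm_tensH_comp (W:=A) (dag mu) (dag u ⊗ idm A))).
  rewrite dag_mu_counitl.
  assert (E' : (rho A ⊗ idm A) ∘ alpha_inv A unitO A ∘ (idm A ⊗ lambda_inv A)
               = idm (tens A A)) by coherence.
  crewrite E'. now rewrite comp_idr, <- idm_tensH_comp, H_involutive.
Qed.

End Cnot.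

Section Unitary.
Context {C : SMDC}.

Lemma unitary_comp {X Y Z : Ob C} (f : Hom C X Y) (g : Hom C Y Z) :
  unitary f -> unitary g -> unitary (g ∘ f).
Proof.
  intros [Ef Ef'] [Eg Eg']. unfold unitary. rewrite dag_comp. split.
  - lassoc. now rewrite <- (comp_assoc g (dag g) (dag f)), Eg, comp_idr.
  - lassoc. now rewrite <- (comp_assoc (dag f) f g), Ef', comp_idr.
Qed.

Lemma unitary_tensH {X Y X' Y' : Ob C} (f : Hom C X Y) (g : Hom C X' Y') :
  unitary f -> unitary g -> unitary (f ⊗ g).
Proof.
  intros [Ef Ef'] [Eg Eg']. unfold unitary. rewrite dag_tens, <- !tensH_comp.
  split; [rewrite Ef, Eg | rewrite Ef', Eg']; apply tensH_id.
Qed.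

Lemma unitary_idm (X : Ob C) : unitary (idm X).
Proof. unfold unitary. now rewrite dag_id, comp_idl. Qed.

End Unitary.

Lemma castH_pure {C : SMDC} (pure : forall A B : Ob C, Hom C A B -> Prop) {X Y X' Y' : Ob C}
  (e1 : X = X') (e2 : Y = Y') (f : Hom C X Y) :
  pure _ _ f -> pure _ _ (castH (Hom := Hom C) e1 e2 f).
Proof. now destruct e1, e2. Qed.

Section CnotUnitary.
Context {C : SMDC} {pure : forall A B : Ob C, Hom C A B -> Prop}
  {eta : forall A : Ob C, Hom C unitO (tens A A)}
  {A : Ob C} {mu : Hom C (tens A A) A} {u : Hom C unitO A} {H : Hom C A A}.

Lemma CNOT_normal_form : CNOT mu u H = cnot_normal mu H.
Proof.
  unfold CNOT, cnot_normal. rewrite Xi21, Xi12, castH_cod_alpha_inv. lassoc.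
  crewrite (eq_sym (alpha_inv_nat (idm A) H (idm A))).
  crewrite (eq_sym (idm_tensH_comp (W:=A) (dag mu) (H ⊗ idm A))).
  now crewrite (eq_sym (idm_tensH_comp (W:=A) H ((H ⊗ idm A) ∘ dag mu))).
Qed.

Lemma CNOT_pure (Hpure : pure_subcategory pure eta)
  (Hcl : classical_structure pure eta mu u) (HH : complementary pure eta mu u H) :
  pure _ _ (CNOT mu u H).
Proof.
  destruct Hpure as (Pid & Pcomp & Ptens & Pdag & _).
  destruct Hcl as (Pmu & _). destruct HH as (PH & _).
  unfold CNOT. rewrite Xi21, Xi12.
  repeat first [ apply Pcomp | apply Ptens | apply Pdag | apply castH_pure | apply Pid
               | assumption ].
Qed.

Lemma CNOT_unitary (Hcl : classical_structure pure eta mu u)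
  (HH : complementary pure eta mu u H) : unitary (CNOT mu u H).
Proof.
  rewrite CNOT_normal_form.
  split; [eapply cnot_normal_isometry | eapply cnot_normal_coisometry].
  all: first [ apply (classical_frobenius Hcl) | apply (classical_mu_assoc Hcl)
             | apply (classical_mu_unitl Hcl) | apply (classical_mu_unitr Hcl)
             | apply (complementary_involutive HH) | apply (complementary_dag HH)
             | apply (complementary_cup HH Hcl) | apply (complementary_hopf HH) ].
Qed.

End CnotUnitary.

Theorem mainTheorem5 (C : SMDC)
    (pure : forall A B : Ob C, Hom C A B -> Prop)
    (eta : forall A : Ob C, Hom C unitO (tens A A))
    (top : forall A : Ob C, Hom C A unitO)
    (Hpure : pure_subcategory pure eta)
    (Hdual : self_dual eta)
    (Henv : environment pure eta top)
    (A : Ob C) (mu : Hom C (tens A A) A) (u : Hom C unitO A)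
    (Hcl : classical_structure pure eta mu u)
    (H : Hom C A A)
    (HH : complementary pure eta mu u H) :
  nondeg_destructive_measurement pure top mu u (n:=2) (BellMeas top mu u H).
Proof.
  exists ((H ⊗ idm A) ∘ CNOT mu u H). split; [|split].
  - pose proof (CNOT_pure Hpure Hcl HH) as Pcnot.
    destruct Hpure as (Pid & Pcomp & Ptens & _).
    apply Pcomp; [exact Pcnot | apply Ptens; [apply HH | apply Pid]].
  - apply unitary_comp; [apply (CNOT_unitary Hcl HH) |].
    apply unitary_tensH; [apply (complementary_unitary HH) | apply unitary_idm].
  - unfold BellMeas. simpl. now rewrite comp_assoc, <- tensH_comp, comp_idr.
Qed.
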